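(* Let $w$ be analytic on the open unit disk $D=\{|z|<1\}$ and suppose $w$ has a borderline hard singularity at a point $z_1$ with $|z_1|=1$. Then this singularity is integrable: the integral of $w$ along curves in $D$ reaching $z_1$ exists and is a finite complex number.
   Context: An inner analytic function is one analytic on the open unit disk centered at the origin. Its angular primitive is $w^{-1\cdot}(z)=-i\int_0^z\frac{w(z')-w(0)}{z'}dz'$ (integral along any curve in the disk, integrand extended at $0$ by $w'(0)$). A singular point of $w$ on the unit circle is a point where $w$ fails to be analytic; a singularity at $z_1$ is soft if $\lim_{z\to z_1}w(z)$ (from within the disk) exists and is finite, and hard otherwise. A hard singularity of $w$ at $z_1$ is borderline hard (degree of hardness zero) if a single angular integration produces a function $w^{-1\cdot}$ which has a soft singularity at $z_1$. *)

From Stdlib Require Import Reals.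
From Coquelicot Require Import Coquelicot.
Open Scope R_scope.

Definition Disk (z : C) : Prop := Cmod z < 1.

Definition analytic_on (U : C -> Prop) (f : C -> C) : Prop :=
  forall z, U z -> @ex_derive C_AbsRing C_NormedModule f z.

Definition CRInt (f : R -> C) (a b : R) : C :=
  @RInt C_R_CompleteNormedModule f a b.

Definition ang_integrand (w : C -> C) (z : C) : C :=
  if Ceq_dec z (RtoC 0) then
    @iota (CompleteNormedModule.CompleteSpace _ C_CompleteNormedModule)
      (fun l => @is_derive C_AbsRing C_NormedModule w (RtoC 0) l)
  else ((w z - w (RtoC 0)) / z)%C.

(* Angular primitive  w^{-1.}(z) = -i \int_0^z (w(z')-w(0))/z' dz',
   the integral taken along the segment t |-> t z, t in [0,1]. *)
Definition ang_prim (w : C -> C) (z : C) : C :=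
  (- Ci * CRInt (fun t : R => (ang_integrand w (RtoC t * z) * z)%C) 0 1)%C.

Definition singular_point (f : C -> C) (z1 : C) : Prop :=
  ~ exists (r : R) (g : C -> C),
      0 < r /\
      analytic_on (fun z => Cmod (z - z1) < r) g /\
      (forall z, Disk z -> Cmod (z - z1) < r -> g z = f z).

Definition has_finite_limit_in_disk (f : C -> C) (z1 : C) : Prop :=
  exists l : C, filterlim f (within Disk (locally z1)) (locally l).

Definition soft_singularity (f : C -> C) (z1 : C) : Prop :=
  singular_point f z1 /\ has_finite_limit_in_disk f z1.

Definition hard_singularity (f : C -> C) (z1 : C) : Prop :=
  singular_point f z1 /\ ~ has_finite_limit_in_disk f z1.

Definition borderline_hard (w : C -> C) (z1 : C) : Prop :=
  hard_singularity w z1 /\ soft_singularity (ang_prim w) z1.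

Definition curve_to (gamma dgamma : R -> C) (z1 : C) : Prop :=
  (forall t, 0 <= t < 1 -> Disk (gamma t)) /\
  (forall t, 0 <= t < 1 ->
      @is_derive R_AbsRing C_R_NormedModule gamma t (dgamma t)) /\
  (forall t, 0 <= t < 1 -> @continuous R_UniformSpace C_UniformSpace dgamma t) /\
  gamma 1 = z1 /\
  filterlim gamma (at_left 1) (locally z1).

Definition path_integral (w : C -> C) (gamma dgamma : R -> C) (s : R) : C :=
  CRInt (fun t => (w (gamma t) * dgamma t)%C) 0 s.

(* Write [g z = (w z - w 0) / z] ([ang_integrand w]) and [P z = int_[0,z] g]
   ([ang_primitive w]), so that [ang_prim w = -i P] and the hypothesis says that [P] has a
   finite limit [L] at [z1].  By Goursat's theorem, [F z = int_[0,z] w] is a primitive of [w]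
   on the disk, and [P] is a primitive of [g] on the half-disk [{z | Re (conj z1 * z) > 0}];
   at 0, where [g] is only known to be continuous, Goursat's argument still works for
   triangles with a vertex there after cutting off a small corner.  Since [w = w 0 + z g],
   integrating by parts along a segment [[a,b]] of the half-disk gives
     [int_[a,b] w = (b - a) w 0 + b (P b - L) - a (P a - L) - int_[a,b] (P - L)],
   which tends to 0 as [a, b -> z1].  Hence [F] satisfies the Cauchy criterion at [z1], and
   the path integral [F (gamma s) - F (gamma 0)] converges as [s -> 1]. *)

From Stdlib Require Import Reals Lra Lia.
From Coquelicot Require Import Coquelicot.
Open Scope R_scope.

(** * Complex derivatives and continuity *)

Notation is_C_derive := (@is_derive C_AbsRing C_NormedModule).
Notation ex_C_derive := (@ex_derive C_AbsRing C_NormedModule).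
Notation is_RC_derive := (@is_derive R_AbsRing C_R_NormedModule).

Ltac Csimpl := rewrite ?RtoC_plus, ?RtoC_mult, ?RtoC_minus, ?RtoC_opp.
Ltac Cring := match goal with |- ?x = ?y => change (@eq C x y); ring end.
Ltac Cfield := apply injective_projections; unfold Cminus, Cplus, Cmult, Copp, RtoC; simpl; field.

Lemma Cmod_scal (t : R) (z : C) : Cmod (RtoC t * z) = Rabs t * Cmod z.
Proof. rewrite Cmod_mult, Cmod_R. reflexivity. Qed.

Lemma Cmod_sym (x y : C) : Cmod (x - y) = Cmod (y - x).
Proof. replace (x - y)%C with (- (y - x))%C by ring. apply Cmod_opp. Qed.

Lemma Cmod_sub_le (x y : C) : Cmod (x - y) <= Cmod x + Cmod y.
Proof. pose proof (Cmod_triangle x (- y)) as H. rewrite Cmod_opp in H. exact H. Qed.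

Lemma Rle_of_forall_eps x y : (forall e, 0 < e -> x <= y + e) -> x <= y.
Proof.
  intros H. destruct (Rle_dec x y) as [h|h]; [exact h|].
  specialize (H ((x - y) / 2) ltac:(lra)). lra.
Qed.

Lemma is_derive_eps {K : AbsRing} {V : NormedModule K} (f : K -> V) x l :
  is_derive f x l <-> forall eps : posreal, exists delta : posreal, forall y,
    norm (minus y x) < delta ->
    norm (minus (minus (f y) (f x)) (scal (minus y x) l)) <= eps * norm (minus y x).
Proof.
  split.
  - intros [_ H] eps.
    specialize (H x (fun P HP => HP) eps).
    destruct (@locally_le_locally_norm K (AbsRing_NormedModule K) x _ H) as [d Hd].
    exists d. intros y Hy. apply Hd. exact Hy.
  - intros H. split; [apply is_linear_scal_l|].
    intros y Hy. apply (@is_filter_lim_locally_unique K (AbsRing_NormedModule K)) in Hy. subst y.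
    intros eps. apply (@locally_norm_le_locally K (AbsRing_NormedModule K)).
    destruct (H eps) as [d Hd]. exists d. intros y Hy. apply Hd. exact Hy.
Qed.

Lemma is_C_derive_eps (f : C -> C) z l :
  is_C_derive f z l <->
  forall eps, 0 < eps -> exists delta, 0 < delta /\ forall y,
    Cmod (y - z) < delta -> Cmod (f y - f z - (y - z) * l) <= eps * Cmod (y - z).
Proof.
  rewrite is_derive_eps. split.
  - intros H eps Heps. destruct (H (mkposreal eps Heps)) as [d Hd].
    exists d. split; [apply cond_pos|]. intros y Hy. apply (Hd y Hy).
  - intros H eps. destruct (H eps (cond_pos eps)) as [d [Hd1 Hd2]].
    exists (mkposreal d Hd1). intros y Hy. apply (Hd2 y Hy).
Qed.

Lemma is_RC_derive_eps (g : R -> C) t d :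
  is_RC_derive g t d <->
  forall eps, 0 < eps -> exists delta, 0 < delta /\ forall s,
    Rabs (s - t) < delta -> Cmod (g s - g t - RtoC (s - t) * d) <= eps * Rabs (s - t).
Proof.
  rewrite is_derive_eps. split.
  - intros H eps Heps. destruct (H (mkposreal eps Heps)) as [de Hd].
    exists de. split; [apply cond_pos|]. intros s Hs.
    specialize (Hd s Hs). rewrite <- Cmod_norm, scal_R_Cmult in Hd. exact Hd.
  - intros H eps. destruct (H eps (cond_pos eps)) as [de [Hd1 Hd2]].
    exists (mkposreal de Hd1). intros s Hs. rewrite scal_R_Cmult, <- Cmod_norm.
    apply (Hd2 s Hs).
Qed.

(* [C_NormedModule] and [C_AbsRing] equip [C] with different (equivalent) uniform structures;
   Coquelicot's product and composition rules are stated for the latter. *)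
Lemma is_C_derive_AbsRing (f : C -> C) z l :
  is_C_derive f z l <-> @is_derive C_AbsRing (AbsRing_NormedModule C_AbsRing) f z l.
Proof. rewrite !is_derive_eps. reflexivity. Qed.

Lemma continuous_C_AbsRing_codom {U : UniformSpace} (f : U -> C) x :
  @continuous U C_UniformSpace f x <-> @continuous U (AbsRing_UniformSpace C_AbsRing) f x.
Proof. split; intros H P HP; apply H; apply locally_C; exact HP. Qed.

Lemma continuous_C_AbsRing_dom {V : UniformSpace} (f : C -> V) z :
  @continuous C_UniformSpace V f z <-> @continuous (AbsRing_UniformSpace C_AbsRing) V f z.
Proof. split; intros H P HP; apply locally_C; apply H; exact HP. Qed.

Lemma continuous_C_eps (f : C -> C) z :
  continuous f z <->
  forall eps, 0 < eps -> exists delta, 0 < delta /\ forall y,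
    Cmod (y - z) < delta -> Cmod (f y - f z) < eps.
Proof.
  split.
  - intros H eps Heps.
    assert (Hl : @locally C_UniformSpace (f z) (fun u => Cmod (u - f z) < eps)).
    { apply (@locally_le_locally_norm C_AbsRing C_NormedModule).
      exists (mkposreal eps Heps). intros u Hu. exact Hu. }
    destruct (@locally_norm_le_locally C_AbsRing C_NormedModule z _ (H _ Hl)) as [d Hd].
    exists d. split; [apply cond_pos|]. intros y Hy. apply (Hd y Hy).
  - intros H P HP.
    destruct (@locally_norm_le_locally C_AbsRing C_NormedModule (f z) _ HP) as [e He].
    apply (@locally_le_locally_norm C_AbsRing C_NormedModule).
    destruct (H e (cond_pos e)) as [d [Hd1 Hd2]].
    exists (mkposreal d Hd1). intros y Hy. apply He. apply (Hd2 y Hy).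
Qed.

Lemma ex_C_derive_continuous (f : C -> C) z : ex_C_derive f z -> continuous f z.
Proof. intros H. apply continuous_C_AbsRing_dom, (ex_derive_continuous f z H). Qed.

Lemma continuous_Cmult {U : UniformSpace} (f g : U -> C) x :
  continuous f x -> continuous g x -> continuous (fun y => f y * g y)%C x.
Proof. rewrite !continuous_C_AbsRing_codom. apply (@continuous_mult U C_AbsRing). Qed.

Lemma is_C_derive_mult (f g : C -> C) z a b :
  is_C_derive f z a -> is_C_derive g z b ->
  is_C_derive (fun y => f y * g y)%C z (a * g z + f z * b)%C.
Proof.
  rewrite !is_C_derive_AbsRing. intros Hf Hg.
  apply (is_derive_mult f g z a b Hf Hg), Cmult_comm.
Qed.

Lemma is_C_derive_plus_const (k : C) (f : C -> C) z l :
  is_C_derive f z l -> is_C_derive (fun y => k + f y)%C z l.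
Proof.
  rewrite !is_C_derive_eps. intros H e He. destruct (H e He) as (d & Hd & Hdd).
  exists d. split; [exact Hd|]. intros y Hy.
  replace (k + f y - (k + f z) - (y - z) * l)%C with (f y - f z - (y - z) * l)%C by ring. auto.
Qed.

Lemma is_C_derive_id z : is_C_derive (fun y => y) z (RtoC 1).
Proof. apply is_C_derive_AbsRing, (@is_derive_id C_AbsRing z). Qed.

Lemma is_C_derive_Cinv z : z <> RtoC 0 -> is_C_derive Cinv z (- / (z * z))%C.
Proof.
  intros Hz. apply is_C_derive_eps. intros e He.
  assert (Hz0 : 0 < Cmod z) by (apply Cmod_gt_0; exact Hz).
  assert (Hz3 : 0 < Cmod z * Cmod z * Cmod z) by (repeat apply Rmult_lt_0_compat; lra).
  exists (Rmin (Cmod z / 2) (e * (Cmod z * Cmod z * Cmod z) / 2)). split.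
  { apply Rmin_pos; [lra|]. apply Rdiv_lt_0_compat; [apply Rmult_lt_0_compat|]; lra. }
  intros y Hy.
  assert (Hy1 := Rlt_le_trans _ _ _ Hy (Rmin_l _ _)).
  assert (Hy2 := Rlt_le_trans _ _ _ Hy (Rmin_r _ _)).
  (* [|y| >= |z|/2], so the remainder [(y-z)^2/(y z^2)] is at most [2|y-z|^2/|z|^3]. *)
  assert (Hyz : Cmod z / 2 <= Cmod y).
  { pose proof (Cmod_triangle y (- (y - z))) as T.
    replace (y + - (y - z))%C with z in T by ring. rewrite Cmod_opp in T. lra. }
  assert (ny : y <> RtoC 0) by (intros ->; rewrite Cmod_0 in Hyz; lra).
  replace (/ y - / z - (y - z) * - / (z * z))%C with ((y - z) * (y - z) / (y * z * z))%C
    by (field; auto).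
  rewrite Cmod_div by (repeat apply Cmult_neq_0; auto).
  rewrite !Cmod_mult. pose proof (Cmod_ge_0 (y - z)) as Hm.
  apply Rle_div_l; [repeat apply Rmult_lt_0_compat; lra|].
  assert (Cmod z * Cmod z * Cmod z <= 2 * (Cmod y * Cmod z * Cmod z)).
  { assert (0 <= Cmod z * Cmod z) by nra. nra. }
  assert (Cmod (y - z) <= e * (Cmod y * Cmod z * Cmod z)) by nra.
  nra.
Qed.

Lemma is_RC_derive_comp (f : C -> C) (g : R -> C) t L d :
  is_C_derive f (g t) L -> is_RC_derive g t d ->
  is_RC_derive (fun s => f (g s)) t (L * d)%C.
Proof.
  rewrite is_C_derive_eps, !is_RC_derive_eps. intros Hf Hg e He.
  pose proof (Cmod_ge_0 L) as HL. pose proof (Cmod_ge_0 d) as Hd.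
  destruct (Hg 1 Rlt_0_1) as [d1 [Hd1 H1]].
  destruct (Hg (e / (2 * (Cmod L + 1)))) as [d2 [Hd2 H2]]; [apply Rdiv_lt_0_compat; lra|].
  destruct (Hf (e / (2 * (Cmod d + 1)))) as [d3 [Hd3 H3]]; [apply Rdiv_lt_0_compat; lra|].
  exists (Rmin d1 (Rmin d2 (d3 / (Cmod d + 1)))). split.
  { repeat apply Rmin_pos; try lra. apply Rdiv_lt_0_compat; lra. }
  intros s Hs. pose proof (Rabs_pos (s - t)) as Ha.
  assert (Hs1 := Rlt_le_trans _ _ _ Hs (Rmin_l _ _)).
  assert (Hs' := Rlt_le_trans _ _ _ Hs (Rmin_r _ _)).
  assert (Hs2 := Rlt_le_trans _ _ _ Hs' (Rmin_l _ _)).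
  assert (Hs3 := Rlt_le_trans _ _ _ Hs' (Rmin_r _ _)).
  specialize (H1 s Hs1). specialize (H2 s Hs2).
  assert (Hgs : Cmod (g s - g t) <= Rabs (s - t) * (Cmod d + 1)).
  { replace (g s - g t)%C with ((g s - g t - RtoC (s - t) * d) + RtoC (s - t) * d)%C by ring.
    eapply Rle_trans; [apply Cmod_triangle|]. rewrite Cmod_scal. lra. }
  specialize (H3 (g s) ltac:(apply Rlt_div_r in Hs3; lra)).
  replace (f (g s) - f (g t) - RtoC (s - t) * (L * d))%C
    with ((f (g s) - f (g t) - (g s - g t) * L) + L * (g s - g t - RtoC (s - t) * d))%C by ring.
  eapply Rle_trans; [apply Cmod_triangle|]. rewrite Cmod_mult.
  assert (e / (2 * (Cmod d + 1)) * Cmod (g s - g t) <= e / 2 * Rabs (s - t)).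
  { apply Rle_trans with (e / (2 * (Cmod d + 1)) * (Rabs (s - t) * (Cmod d + 1))).
    - apply Rmult_le_compat_l; [apply Rlt_le, Rdiv_lt_0_compat; lra|exact Hgs].
    - right. field. lra. }
  assert (Cmod L * Cmod (g s - g t - RtoC (s - t) * d) <= e / 2 * Rabs (s - t)).
  { apply Rle_trans with ((Cmod L + 1) * (e / (2 * (Cmod L + 1)) * Rabs (s - t))).
    - apply Rmult_le_compat; try apply Cmod_ge_0; lra.
    - right. field. lra. }
  lra.
Qed.

(** * Integrals along segments *)

Definition seg_integrand (f : C -> C) (a b : C) (t : R) : C :=
  (f (a + RtoC t * (b - a)) * (b - a))%C.

Definition seg_integral (f : C -> C) (a b : C) : C := CRInt (seg_integrand f a b) 0 1.

Definition continuous_on_seg (f : C -> C) (a b : C) : Prop :=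
  forall t, 0 <= t <= 1 -> continuous f (a + RtoC t * (b - a))%C.

Lemma is_RC_derive_seg (a b : C) t :
  is_RC_derive (fun s => a + RtoC s * (b - a))%C t (b - a)%C.
Proof.
  apply is_RC_derive_eps. intros e He. exists 1. split; [lra|]. intros s _.
  replace (a + RtoC s * (b - a) - (a + RtoC t * (b - a)) - RtoC (s - t) * (b - a))%C
    with (RtoC 0) by (Csimpl; ring).
  rewrite Cmod_0. pose proof (Rabs_pos (s - t)). nra.
Qed.

Lemma continuous_comp_RC (f : C -> C) (g : R -> C) t d :
  is_RC_derive g t d -> continuous f (g t) -> continuous (fun s => f (g s)) t.
Proof.
  intros Hg Hf. apply (continuous_comp g f t); [|exact Hf].
  apply (@ex_derive_continuous R_AbsRing C_R_NormedModule). exists d. exact Hg.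
Qed.

Lemma continuous_seg_integrand f a b t :
  continuous f (a + RtoC t * (b - a))%C -> continuous (seg_integrand f a b) t.
Proof.
  intros Hf. apply continuous_Cmult; [|apply continuous_const].
  exact (continuous_comp_RC f _ t _ (is_RC_derive_seg a b t) Hf).
Qed.

Lemma ex_RInt_seg_integrand f a b u v :
  continuous_on_seg f a b -> 0 <= u -> u <= v -> v <= 1 ->
  @ex_RInt C_R_CompleteNormedModule (seg_integrand f a b) u v.
Proof.
  intros Hc Hu Huv Hv. apply ex_RInt_continuous. intros z Hz.
  rewrite Rmin_left in Hz by lra. rewrite Rmax_right in Hz by lra.
  apply continuous_seg_integrand, Hc. lra.
Qed.

Lemma is_RInt_seg_integral f a b : continuous_on_seg f a b ->
  @is_RInt C_R_NormedModule (seg_integrand f a b) 0 1 (seg_integral f a b).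
Proof.
  intros Hc. apply (@RInt_correct C_R_CompleteNormedModule), ex_RInt_seg_integrand; auto; lra.
Qed.

Lemma seg_integral_unique f a b l :
  @is_RInt C_R_NormedModule (seg_integrand f a b) 0 1 l -> seg_integral f a b = l.
Proof. apply (@is_RInt_unique C_R_CompleteNormedModule). Qed.

Lemma seg_integral_reparam f a b a' b' u v l (p q : R) :
  u = p * 0 + q -> v = p * 1 + q ->
  (forall t, (a + RtoC (p * t + q) * (b - a) = a' + RtoC t * (b' - a'))%C) ->
  (RtoC p * (b - a) = b' - a')%C ->
  @is_RInt C_R_NormedModule (seg_integrand f a b) u v l ->
  seg_integral f a' b' = l.
Proof.
  intros -> -> Hpt Hdir H. apply seg_integral_unique.
  apply is_RInt_comp_lin in H. eapply is_RInt_ext; [|exact H].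
  intros t _. cbv beta. rewrite scal_R_Cmult. unfold seg_integrand.
  rewrite Hpt, <- Hdir. Cring.
Qed.

Lemma seg_integral_split f a b s :
  continuous_on_seg f a b -> 0 <= s <= 1 ->
  seg_integral f a b =
    (seg_integral f a (a + RtoC s * (b - a)) + seg_integral f (a + RtoC s * (b - a)) b)%C.
Proof.
  intros Hc Hs.
  assert (E1 := ex_RInt_seg_integrand f a b 0 s Hc ltac:(lra) ltac:(lra) ltac:(lra)).
  assert (E2 := ex_RInt_seg_integrand f a b s 1 Hc ltac:(lra) ltac:(lra) ltac:(lra)).
  assert (I1 : seg_integral f a (a + RtoC s * (b - a)) = CRInt (seg_integrand f a b) 0 s).
  { apply (seg_integral_reparam f a b _ _ 0 s _ s 0);
      [ring | ring | intros t; Csimpl; ring | Csimpl; ring |].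
    apply (@RInt_correct C_R_CompleteNormedModule), E1. }
  assert (I2 : seg_integral f (a + RtoC s * (b - a)) b = CRInt (seg_integrand f a b) s 1).
  { apply (seg_integral_reparam f a b _ _ s 1 _ (1 - s) s);
      [ring | ring | intros t; Csimpl; ring | Csimpl; ring |].
    apply (@RInt_correct C_R_CompleteNormedModule), E2. }
  rewrite I1, I2. unfold seg_integral, CRInt.
  rewrite <- (@RInt_Chasles C_R_CompleteNormedModule _ 0 s 1 E1 E2). reflexivity.
Qed.

Lemma seg_integral_swap f a b :
  continuous_on_seg f a b -> seg_integral f b a = (- seg_integral f a b)%C.
Proof.
  intros Hc. apply (seg_integral_reparam f a b _ _ 1 0 _ (-1) 1);
    [ring | ring | intros t; Csimpl; ring | Csimpl; ring |].
  apply (@is_RInt_swap C_R_NormedModule), is_RInt_seg_integral, Hc.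
Qed.

Lemma seg_integral_plus f g a b :
  continuous_on_seg f a b -> continuous_on_seg g a b ->
  seg_integral (fun z => f z + g z)%C a b = (seg_integral f a b + seg_integral g a b)%C.
Proof.
  intros Hf Hg. apply seg_integral_unique.
  eapply is_RInt_ext; [|exact (is_RInt_plus _ _ _ _ _ _
                                 (is_RInt_seg_integral f a b Hf) (is_RInt_seg_integral g a b Hg))].
  intros t _. unfold seg_integrand. change (plus ?x ?y) with (x + y)%C. Cring.
Qed.

Lemma seg_integral_minus f g a b :
  continuous_on_seg f a b -> continuous_on_seg g a b ->
  seg_integral (fun z => f z - g z)%C a b = (seg_integral f a b - seg_integral g a b)%C.
Proof.
  intros Hf Hg. apply seg_integral_unique.
  eapply is_RInt_ext; [|exact (is_RInt_minus _ _ _ _ _ _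
                                 (is_RInt_seg_integral f a b Hf) (is_RInt_seg_integral g a b Hg))].
  intros t _. unfold seg_integrand. change (minus ?x ?y) with (x - y)%C. Cring.
Qed.

Lemma seg_integral_const k a b : seg_integral (fun _ => k) a b = (k * (b - a))%C.
Proof.
  unfold seg_integral, CRInt, seg_integrand. rewrite RInt_const, scal_R_Cmult. Csimpl. ring.
Qed.

Lemma seg_integral_norm_le f a b M : continuous_on_seg f a b ->
  (forall t, 0 <= t <= 1 -> Cmod (f (a + RtoC t * (b - a))%C) <= M) ->
  Cmod (seg_integral f a b) <= Cmod (b - a) * M.
Proof.
  intros Hc HM. rewrite Cmod_norm.
  replace (Cmod (b - a) * M) with ((1 - 0) * (M * Cmod (b - a))) by ring.
  apply (@norm_RInt_le_const C_R_NormedModule (seg_integrand f a b)); [lra| |].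
  - intros t Ht. rewrite <- Cmod_norm. unfold seg_integrand. rewrite Cmod_mult.
    apply Rmult_le_compat_r; [apply Cmod_ge_0|apply HM, Ht].
  - apply is_RInt_seg_integral, Hc.
Qed.

Lemma RInt_curve_primitive (F f : C -> C) (g dg : R -> C) s : 0 <= s ->
  (forall t, 0 <= t <= s -> is_RC_derive g t (dg t)) ->
  (forall t, 0 <= t <= s -> is_C_derive F (g t) (f (g t))) ->
  (forall t, 0 <= t <= s -> continuous (fun t => f (g t) * dg t)%C t) ->
  CRInt (fun t => f (g t) * dg t)%C 0 s = (F (g s) - F (g 0))%C.
Proof.
  intros Hs Hg HF Hc. apply (@is_RInt_unique C_R_CompleteNormedModule).
  apply (@is_RInt_derive C_R_CompleteNormedModule (fun t => F (g t)));
    intros t Ht; rewrite Rmin_left, Rmax_right in Ht by lra.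
  - apply is_RC_derive_comp; auto.
  - apply Hc, Ht.
Qed.

Lemma seg_integral_primitive (F f : C -> C) a b :
  (forall t, 0 <= t <= 1 -> is_C_derive F (a + RtoC t * (b - a))%C (f (a + RtoC t * (b - a))%C)) ->
  continuous_on_seg f a b -> seg_integral f a b = (F b - F a)%C.
Proof.
  intros HF Hc. unfold seg_integral, seg_integrand.
  rewrite (RInt_curve_primitive F f (fun t => a + RtoC t * (b - a))%C (fun _ => (b - a)%C) 1);
    [| lra | intros t _; apply is_RC_derive_seg | exact HF
     | intros t Ht; apply continuous_seg_integrand, Hc, Ht].
  f_equal; f_equal; ring.
Qed.

(** * Goursat's theorem *)

Definition triangle_integral (f : C -> C) (a b c : C) : C :=
  (seg_integral f a b + seg_integral f b c + seg_integral f c a)%C.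

Definition convex (K : C -> Prop) : Prop :=
  forall x y t, K x -> K y -> 0 <= t <= 1 -> K (x + RtoC t * (y - x))%C.

Definition approx_closed (K : C -> Prop) : Prop :=
  forall z, (forall eps, 0 < eps -> exists y, K y /\ Cmod (y - z) < eps) -> K z.

Lemma continuous_on_seg_convex (K : C -> Prop) f x y :
  convex K -> (forall z, K z -> continuous f z) -> K x -> K y -> continuous_on_seg f x y.
Proof. intros HK Hf Hx Hy t Ht. apply Hf, HK; auto. Qed.

Lemma triangle_integral_primitive (F f : C -> C) a b c :
  (forall z, is_C_derive F z (f z)) -> (forall z, continuous f z) ->
  triangle_integral f a b c = RtoC 0.
Proof.
  intros HF Hc. unfold triangle_integral.
  rewrite !(seg_integral_primitive F f) by (intros t _; auto). ring.
Qed.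

Lemma continuous_affine (k l : C) z : continuous (fun u => k + l * u)%C z.
Proof.
  apply (continuous_plus (K := C_AbsRing) (V := C_NormedModule) (fun _ => k));
    [apply continuous_const|].
  apply continuous_Cmult; [apply continuous_const|apply continuous_id].
Qed.

Lemma triangle_integral_affine (k l : C) a b c :
  triangle_integral (fun u => k + l * u)%C a b c = RtoC 0.
Proof.
  apply (triangle_integral_primitive (fun u => k * u + RtoC (1/2) * l * (u * u))%C).
  - intros z.
    assert (Hsq := is_C_derive_mult _ _ z _ _ (is_C_derive_id z) (is_C_derive_id z)).
    assert (H := is_derive_plus _ _ z _ _
                   (is_C_derive_mult _ _ z _ _ (is_derive_const k z) (is_C_derive_id z))
                   (is_C_derive_mult _ _ z _ _ (is_derive_const (RtoC (1/2) * l)%C z) Hsq)).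
    cbv beta in H. match type of H with is_derive _ _ ?d => replace (k + l * z)%C with d end;
      [exact H|].
    change (plus ?x ?y) with (Cplus x y). change zero with (RtoC 0). Cfield.
  - apply continuous_affine.
Qed.

Definition midpoint (x y : C) : C := (x + RtoC (1/2) * (y - x))%C.

Lemma Cmod_half (z : C) : Cmod (RtoC (1/2) * z) = Cmod z / 2.
Proof. rewrite Cmod_scal, Rabs_pos_eq by lra. field. Qed.

Lemma Cmod_sub_midpoint_l x y : Cmod (x - midpoint x y) = Cmod (x - y) / 2.
Proof.
  unfold midpoint. replace (x - (x + RtoC (1/2) * (y - x)))%C with (RtoC (1/2) * (x - y))%C
    by Cfield. apply Cmod_half.
Qed.

Lemma Cmod_sub_midpoint_r x y : Cmod (midpoint x y - y) = Cmod (x - y) / 2.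
Proof.
  unfold midpoint. replace (x + RtoC (1/2) * (y - x) - y)%C with (RtoC (1/2) * (x - y))%C
    by Cfield. apply Cmod_half.
Qed.

Lemma Cmod_sub_midpoints x y z : Cmod (midpoint x y - midpoint y z) = Cmod (x - z) / 2.
Proof.
  unfold midpoint. replace (x + RtoC (1/2) * (y - x) - (y + RtoC (1/2) * (z - y)))%C
    with (RtoC (1/2) * (x - z))%C by Cfield. apply Cmod_half.
Qed.

Lemma Cmod_sub_midpoints' x y z : Cmod (midpoint x y - midpoint z x) = Cmod (y - z) / 2.
Proof.
  unfold midpoint. replace (x + RtoC (1/2) * (y - x) - (z + RtoC (1/2) * (x - z)))%C
    with (RtoC (1/2) * (y - z))%C by Cfield. apply Cmod_half.
Qed.

Definition triangle : Type := C * C * C.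

Definition tri_integral (f : C -> C) (T : triangle) : C :=
  let '(a, b, c) := T in triangle_integral f a b c.
Definition perimeter (T : triangle) : R :=
  let '(a, b, c) := T in Cmod (a - b) + Cmod (b - c) + Cmod (c - a).
Definition tri_in (K : C -> Prop) (T : triangle) : Prop :=
  let '(a, b, c) := T in K a /\ K b /\ K c.
Definition apex (T : triangle) : C := let '(a, _, _) := T in a.

Definition quarter1 (T : triangle) : triangle :=
  let '(a, b, c) := T in (a, midpoint a b, midpoint c a).
Definition quarter2 (T : triangle) : triangle :=
  let '(a, b, c) := T in (midpoint a b, b, midpoint b c).
Definition quarter3 (T : triangle) : triangle :=
  let '(a, b, c) := T in (midpoint c a, midpoint b c, c).
Definition quarter4 (T : triangle) : triangle :=
  let '(a, b, c) := T in (midpoint a b, midpoint b c, midpoint c a).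

(* The first quarter carrying a fourth of the integral; by [tri_integral_quarters] the fallback
   [quarter4] does when the others do not. *)
Definition goursat_pick (f : C -> C) (T : triangle) : triangle :=
  if Rle_dec (Cmod (tri_integral f T)) (4 * Cmod (tri_integral f (quarter1 T))) then quarter1 T else
  if Rle_dec (Cmod (tri_integral f T)) (4 * Cmod (tri_integral f (quarter2 T))) then quarter2 T else
  if Rle_dec (Cmod (tri_integral f T)) (4 * Cmod (tri_integral f (quarter3 T))) then quarter3 T else
  quarter4 T.

Lemma perimeter_ge0 T : 0 <= perimeter T.
Proof.
  destruct T as [[a b] c]. simpl.
  pose proof (Cmod_ge_0 (a - b)). pose proof (Cmod_ge_0 (b - c)). pose proof (Cmod_ge_0 (c - a)).
  lra.
Qed.

Lemma perimeter_goursat_pick f T : perimeter (goursat_pick f T) = perimeter T / 2.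
Proof.
  destruct T as [[a b] c]. unfold goursat_pick.
  repeat destruct (Rle_dec _ _); simpl;
    rewrite ?Cmod_sub_midpoint_l, ?Cmod_sub_midpoint_r, ?Cmod_sub_midpoints, ?Cmod_sub_midpoints'.
  all: try rewrite (Cmod_sym a c), (Cmod_sym b a), (Cmod_sym c b); field.
Qed.

Lemma Cmod_seg_sub_le x y z t : 0 <= t <= 1 ->
  Cmod (x + RtoC t * (y - x) - z) <= Rmax (Cmod (x - z)) (Cmod (y - z)).
Proof.
  intros Ht.
  replace (x + RtoC t * (y - x) - z)%C with (RtoC (1 - t) * (x - z) + RtoC t * (y - z))%C
    by (Csimpl; ring).
  eapply Rle_trans; [apply Cmod_triangle|]. rewrite !Cmod_scal, !Rabs_pos_eq by lra.
  pose proof (Rmax_l (Cmod (x - z)) (Cmod (y - z))).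
  pose proof (Rmax_r (Cmod (x - z)) (Cmod (y - z))). nra.
Qed.

Lemma Cmod_seg_sub_lt x y z t r : 0 <= t <= 1 ->
  Cmod (x - z) < r -> Cmod (y - z) < r -> Cmod (x + RtoC t * (y - x) - z) < r.
Proof.
  intros Ht Hx Hy. eapply Rle_lt_trans; [apply Cmod_seg_sub_le, Ht|]. now apply Rmax_lub_lt.
Qed.

Section Goursat.

Variables (K : C -> Prop) (f : C -> C).
Hypothesis K_convex : convex K.
Hypothesis f_continuous : forall z, K z -> continuous f z.

Lemma midpoint_in x y : K x -> K y -> K (midpoint x y).
Proof. intros Hx Hy. apply K_convex; auto; lra. Qed.

Lemma tri_integral_quarters a b c : K a -> K b -> K c ->
  tri_integral f (a, b, c) =
  (tri_integral f (quarter1 (a, b, c)) + tri_integral f (quarter2 (a, b, c))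
   + tri_integral f (quarter3 (a, b, c)) + tri_integral f (quarter4 (a, b, c)))%C.
Proof.
  intros Ha Hb Hc. simpl. unfold triangle_integral.
  assert (Hs : forall x y, K x -> K y -> continuous_on_seg f x y)
    by (intros; apply (continuous_on_seg_convex K); auto).
  assert (Mab := midpoint_in a b Ha Hb). assert (Mbc := midpoint_in b c Hb Hc).
  assert (Mca := midpoint_in c a Hc Ha).
  rewrite (seg_integral_split f a b (1/2)), (seg_integral_split f b c (1/2)),
    (seg_integral_split f c a (1/2)) by (auto; lra).
  fold (midpoint a b) (midpoint b c) (midpoint c a).
  rewrite (seg_integral_swap f (midpoint a b) (midpoint c a)),
    (seg_integral_swap f (midpoint b c) (midpoint a b)),
    (seg_integral_swap f (midpoint c a) (midpoint b c)) by auto.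
  ring.
Qed.

Lemma tri_in_goursat_pick T : tri_in K T -> tri_in K (goursat_pick f T).
Proof.
  destruct T as [[a b] c]. intros (Ha & Hb & Hc).
  assert (Mab := midpoint_in a b Ha Hb). assert (Mbc := midpoint_in b c Hb Hc).
  assert (Mca := midpoint_in c a Hc Ha).
  unfold goursat_pick. repeat destruct (Rle_dec _ _); simpl; auto.
Qed.

Lemma tri_integral_goursat_pick T : tri_in K T ->
  Cmod (tri_integral f T) <= 4 * Cmod (tri_integral f (goursat_pick f T)).
Proof.
  destruct T as [[a b] c]. intros (Ha & Hb & Hc). unfold goursat_pick.
  destruct (Rle_dec _ _) as [h1|h1]; [exact h1|].
  destruct (Rle_dec _ _) as [h2|h2]; [exact h2|].
  destruct (Rle_dec _ _) as [h3|h3]; [exact h3|].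
  rewrite (tri_integral_quarters a b c Ha Hb Hc) in h1, h2, h3 |- *.
  set (e1 := tri_integral f (quarter1 (a, b, c))) in *.
  set (e2 := tri_integral f (quarter2 (a, b, c))) in *.
  set (e3 := tri_integral f (quarter3 (a, b, c))) in *.
  set (e4 := tri_integral f (quarter4 (a, b, c))) in *.
  pose proof (Cmod_triangle (e1 + e2 + e3) e4). pose proof (Cmod_triangle (e1 + e2) e3).
  pose proof (Cmod_triangle e1 e2). lra.
Qed.

End Goursat.

Lemma apex_goursat_pick f T : Cmod (apex (goursat_pick f T) - apex T) <= perimeter T.
Proof.
  destruct T as [[a b] c]. unfold goursat_pick. simpl.
  pose proof (Cmod_ge_0 (a - b)). pose proof (Cmod_ge_0 (b - c)). pose proof (Cmod_ge_0 (c - a)).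
  repeat destruct (Rle_dec _ _); simpl;
    rewrite ?Cmod_sub_midpoint_r, ?(Cmod_sym (midpoint a b)), ?Cmod_sub_midpoint_l.
  all: try (replace (a - a)%C with (RtoC 0) by ring; rewrite Cmod_0); lra.
Qed.

Lemma C_cauchy_limit (u : nat -> C) (r : nat -> R) :
  (forall n m, (n <= m)%nat -> Cmod (u m - u n) <= r n) ->
  (forall e, 0 < e -> exists N, r N < e) ->
  exists y, forall n, Cmod (y - u n) <= r n.
Proof.
  intros Hu Hr.
  destruct (proj1 (@filterlim_locally_cauchy nat
                     (CompleteNormedModule.CompleteSpace _ C_CompleteNormedModule) eventually _ u))
    as [y Hy].
  { intros eps. destruct (Hr (eps / 2) ltac:(pose proof (cond_pos eps); lra)) as [N HN].
    exists (fun n => (N <= n)%nat). split; [exists N; auto|].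
    intros m k Hm Hk. apply (@norm_compat1 C_AbsRing C_NormedModule).
    change (Cmod (u k - u m) < eps).
    replace (u k - u m)%C with ((u k - u N) - (u m - u N))%C by ring.
    eapply Rle_lt_trans; [apply Cmod_triangle|]. rewrite Cmod_opp.
    pose proof (Hu N k Hk). pose proof (Hu N m Hm). lra. }
  exists y. intros n. apply Rle_of_forall_eps. intros e He.
  assert (Hl : @locally C_UniformSpace y (fun z => Cmod (z - y) < e)).
  { apply (@locally_le_locally_norm C_AbsRing C_NormedModule). exists (mkposreal e He). auto. }
  destruct (Hy _ Hl) as [N HN]. specialize (HN (Nat.max N n) (Nat.le_max_l _ _)).
  pose proof (Hu n _ (Nat.le_max_r N n)).
  replace (y - u n)%C with (- (u (Nat.max N n) - y) + (u (Nat.max N n) - u n))%C by ring.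
  eapply Rle_trans; [apply Cmod_triangle|]. rewrite Cmod_opp. simpl in HN. lra.
Qed.

Lemma half_pow_small (p e : R) : 0 < e -> exists N, p * (1/2) ^ N < e.
Proof.
  intros He.
  destruct (pow_lt_1_zero (1/2) ltac:(rewrite Rabs_pos_eq; lra) (e / (Rabs p + 1)))
    as [N HN]; [apply Rdiv_lt_0_compat; pose proof (Rabs_pos p); lra|].
  exists N. specialize (HN N (le_n N)). rewrite Rabs_pos_eq in HN by (apply pow_le; lra).
  apply Rlt_div_r in HN; [|pose proof (Rabs_pos p); lra].
  pose proof (Rle_abs p). pose proof (pow_le (1/2) N ltac:(lra)). nra.
Qed.

Definition goursat_nest (f : C -> C) (T0 : triangle) (n : nat) : triangle :=
  Nat.iter n (goursat_pick f) T0.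

Section Nest.

Variables (K : C -> Prop) (f : C -> C) (T0 : triangle).
Hypothesis K_convex : convex K.
Hypothesis f_continuous : forall z, K z -> continuous f z.
Hypothesis T0_in : tri_in K T0.

Let T := goursat_nest f T0.

Lemma tri_in_goursat_nest n : tri_in K (T n).
Proof. induction n; [exact T0_in|]. apply tri_in_goursat_pick; auto. Qed.

Lemma perimeter_goursat_nest n : perimeter (T n) = perimeter T0 * (1/2) ^ n.
Proof.
  induction n; simpl pow; [simpl; ring|].
  unfold T in *. simpl. rewrite perimeter_goursat_pick, IHn. field.
Qed.

Lemma tri_integral_goursat_nest n :
  Cmod (tri_integral f T0) <= 4 ^ n * Cmod (tri_integral f (T n)).
Proof.
  induction n; [simpl; lra|].
  pose proof (tri_integral_goursat_pick K f K_convex f_continuous (T n) (tri_in_goursat_nest n)).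
  pose proof (pow_le 4 n ltac:(lra)). simpl pow. unfold T in *. simpl. nra.
Qed.

Lemma apex_goursat_nest n m : (n <= m)%nat ->
  Cmod (apex (T m) - apex (T n)) <= 2 * perimeter (T n).
Proof.
  intros Hnm. replace m with (n + (m - n))%nat by lia.
  assert (H : forall k,
             Cmod (apex (T (n + k)) - apex (T n)) <= 2 * perimeter (T n) * (1 - (1/2) ^ k)).
  { induction k.
    - rewrite Nat.add_0_r. replace (apex (T n) - apex (T n))%C with (RtoC 0) by ring.
      rewrite Cmod_0. simpl. lra.
    - rewrite Nat.add_succ_r. change (T (S (n + k))) with (goursat_pick f (T (n + k))).
      replace (apex (goursat_pick f (T (n + k))) - apex (T n))%C
        with ((apex (goursat_pick f (T (n + k))) - apex (T (n + k)))
              + (apex (T (n + k)) - apex (T n)))%C by ring.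
      eapply Rle_trans; [apply Cmod_triangle|].
      pose proof (apex_goursat_pick f (T (n + k))) as H1.
      rewrite perimeter_goursat_nest, pow_add in H1. rewrite perimeter_goursat_nest in IHk |- *.
      simpl pow. lra. }
  eapply Rle_trans; [apply H|].
  pose proof (perimeter_ge0 (T n)). pose proof (pow_le (1/2) (m - n) ltac:(lra)). nra.
Qed.

Lemma goursat_nest_limit : approx_closed K ->
  exists y, K y /\ forall n, Cmod (y - apex (T n)) <= 2 * perimeter (T n).
Proof.
  intros Hcl.
  destruct (C_cauchy_limit (fun n => apex (T n)) (fun n => 2 * perimeter (T n)) apex_goursat_nest)
    as [y Hy].
  { intros e He. destruct (half_pow_small (2 * perimeter T0) e He) as [N HN].
    exists N. rewrite perimeter_goursat_nest. lra. }
  exists y. split; [|exact Hy].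
  apply Hcl. intros e He. destruct (half_pow_small (2 * perimeter T0) e He) as [N HN].
  exists (apex (T N)). split.
  - pose proof (tri_in_goursat_nest N) as HN'. destruct (T N) as [[a b] c]. apply HN'.
  - rewrite Cmod_sym. specialize (Hy N). rewrite perimeter_goursat_nest in Hy. lra.
Qed.

End Nest.

Lemma triangle_integral_sub_affine (K : C -> Prop) (f : C -> C) k l a b c :
  convex K -> (forall z, K z -> continuous f z) -> K a -> K b -> K c ->
  triangle_integral (fun u => f u - (k + l * u))%C a b c = triangle_integral f a b c.
Proof.
  intros HK Hf Ha Hb Hc.
  assert (Hs : forall x y, K x -> K y -> continuous_on_seg f x y)
    by (intros; apply (continuous_on_seg_convex K); auto).
  assert (Hl : forall x y, continuous_on_seg (fun u => k + l * u)%C x y)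
    by (intros x y t _; apply continuous_affine).
  pose proof (triangle_integral_affine k l a b c) as E0. unfold triangle_integral in *.
  rewrite !seg_integral_minus by auto.
  transitivity (seg_integral f a b + seg_integral f b c + seg_integral f c a
                - (seg_integral (fun u => k + l * u)%C a b + seg_integral (fun u => k + l * u)%C b c
                   + seg_integral (fun u => k + l * u)%C c a))%C; [|rewrite E0]; ring.
Qed.

(* On a triangle close to a point [y] of differentiability, [f] is [e]-close to its tangent
   map, whose triangle integral vanishes. *)
Lemma tri_integral_le_near (K : C -> Prop) (f : C -> C) T y l e d :
  convex K -> (forall z, K z -> continuous f z) -> tri_in K T -> 0 <= e ->
  (forall u, Cmod (u - y) < d -> Cmod (f u - f y - (u - y) * l) <= e * Cmod (u - y)) ->
  Cmod (y - apex T) <= 2 * perimeter T -> 3 * perimeter T < d ->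
  Cmod (tri_integral f T) <= e * (3 * perimeter T ^ 2).
Proof.
  intros HK Hf HT He Hd Hy Hp. pose proof (perimeter_ge0 T) as Hp0.
  destruct T as [[a b] c]. destruct HT as (Ha & Hb & Hc).
  cbn [tri_integral perimeter apex] in Hy, Hp, Hp0 |- *.
  set (p := Cmod (a - b) + Cmod (b - c) + Cmod (c - a)) in *.
  set (r := fun u => (f u - (f y - l * y + l * u))%C).
  assert (Hr : forall z, K z -> continuous r z).
  { intros z Hz. apply (continuous_minus (K := C_AbsRing) (V := C_NormedModule));
      [apply Hf, Hz|apply continuous_affine]. }
  assert (Hrb : forall z, Cmod (z - a) <= p -> Cmod (r z) <= e * (3 * p)).
  { intros z Hz.
    assert (Hzy : Cmod (z - y) <= 3 * p).
    { pose proof (Cmod_triangle (z - a) (a - y)).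
      replace (z - a + (a - y))%C with (z - y)%C in * by ring. rewrite (Cmod_sym a y) in *. lra. }
    unfold r. replace (f z - (f y - l * y + l * z))%C with (f z - f y - (z - y) * l)%C by ring.
    eapply Rle_trans; [apply Hd; lra|]. apply Rmult_le_compat_l; lra. }
  assert (Edge : forall x w, K x -> K w -> Cmod (x - a) <= p -> Cmod (w - a) <= p ->
                   Cmod (seg_integral r x w) <= Cmod (w - x) * (e * (3 * p))).
  { intros x w Hx Hw Hxa Hwa.
    apply seg_integral_norm_le; [apply (continuous_on_seg_convex K); auto|].
    intros t Ht. apply Hrb. eapply Rle_trans; [apply Cmod_seg_sub_le, Ht|]. now apply Rmax_lub. }
  pose proof (Cmod_ge_0 (a - b)). pose proof (Cmod_ge_0 (b - c)). pose proof (Cmod_ge_0 (c - a)).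
  assert (Hba : Cmod (b - a) <= p) by (rewrite Cmod_sym; unfold p; lra).
  assert (Hca : Cmod (c - a) <= p) by (unfold p; lra).
  assert (Haa : Cmod (a - a) <= p)
    by (replace (a - a)%C with (RtoC 0) by ring; rewrite Cmod_0; lra).
  pose proof (Edge a b Ha Hb Haa Hba) as E1. pose proof (Edge b c Hb Hc Hba Hca) as E2.
  pose proof (Edge c a Hc Ha Hca Haa) as E3.
  rewrite (Cmod_sym b a) in E1. rewrite (Cmod_sym c b) in E2. rewrite (Cmod_sym a c) in E3.
  rewrite <- (triangle_integral_sub_affine K f (f y - l * y) l a b c) by auto.
  fold r. unfold triangle_integral.
  pose proof (Cmod_triangle (seg_integral r a b + seg_integral r b c) (seg_integral r c a)).
  pose proof (Cmod_triangle (seg_integral r a b) (seg_integral r b c)).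
  replace (e * (3 * p ^ 2)) with (p * (e * (3 * p))) by ring.
  unfold p at 1. lra.
Qed.

Theorem goursat (K : C -> Prop) (f : C -> C) a b c : convex K -> approx_closed K ->
  (forall z, K z -> ex_C_derive f z) -> K a -> K b -> K c ->
  triangle_integral f a b c = RtoC 0.
Proof.
  intros HK Hcl Hd Ha Hb Hc.
  assert (Hf : forall z, K z -> continuous f z) by (intros; apply ex_C_derive_continuous; auto).
  set (T0 := (a, b, c)). assert (HT0 : tri_in K T0) by (repeat split; auto).
  set (p0 := perimeter T0).
  destruct (goursat_nest_limit K f T0 HK HT0 Hcl) as (y & Ky & Hy).
  destruct (Hd y Ky) as [l Hl]. rewrite is_C_derive_eps in Hl.
  (* [|I T0| <= 4^N |I (T N)| <= 4^N e 3 (p0 / 2^N)^2 = 3 e p0^2] *)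
  assert (Main : forall e, 0 < e -> Cmod (tri_integral f T0) <= e * (3 * p0 ^ 2)).
  { intros e He. destruct (Hl e He) as (d & Hd0 & Hdd).
    destruct (half_pow_small (3 * p0) d Hd0) as [N HN].
    pose proof (tri_integral_le_near K f (goursat_nest f T0 N) y l e d HK Hf
                  (tri_in_goursat_nest K f T0 HK HT0 N) ltac:(lra) Hdd (Hy N)
                  ltac:(rewrite perimeter_goursat_nest; fold p0; lra)) as TB.
    rewrite perimeter_goursat_nest in TB. fold p0 in TB.
    eapply Rle_trans; [exact (tri_integral_goursat_nest K f T0 HK Hf HT0 N)|].
    replace (e * (3 * p0 ^ 2)) with (4 ^ N * (e * (3 * (p0 * (1/2) ^ N) ^ 2))).
    - apply Rmult_le_compat_l; [apply pow_le; lra|exact TB].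
    - assert (Q : 4 ^ N * ((1/2) ^ N) ^ 2 = 1).
      { rewrite <- pow_mult, Nat.mul_comm, pow_mult, <- Rpow_mult_distr.
        replace (4 * (1/2) ^ 2) with 1 by field. apply pow1. }
      rewrite Rpow_mult_distr.
      transitivity (e * (3 * p0 ^ 2) * (4 ^ N * ((1/2) ^ N) ^ 2)); [|rewrite Q]; ring. }
  apply Cmod_eq_0, Rle_antisym; [|apply Cmod_ge_0].
  apply Rle_of_forall_eps. intros e He.
  assert (Hp : 0 < 3 * p0 ^ 2 + 1) by (pose proof (pow2_ge_0 p0); lra).
  specialize (Main (e / (3 * p0 ^ 2 + 1)) ltac:(apply Rdiv_lt_0_compat; lra)).
  assert (e / (3 * p0 ^ 2 + 1) * (3 * p0 ^ 2) <= e).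
  { apply Rle_trans with (e / (3 * p0 ^ 2 + 1) * (3 * p0 ^ 2 + 1)).
    - apply Rmult_le_compat_l; [apply Rlt_le, Rdiv_lt_0_compat|]; lra.
    - right. field. lra. }
  change (tri_integral f T0) with (triangle_integral f a b c) in Main. lra.
Qed.

(** * Primitives on the disk *)

Lemma seg_integral_add_of_triangle (f : C -> C) z0 a b :
  triangle_integral f z0 a b = RtoC 0 -> continuous_on_seg f z0 b ->
  seg_integral f z0 b = (seg_integral f z0 a + seg_integral f a b)%C.
Proof.
  unfold triangle_integral. intros HE Hc. rewrite (seg_integral_swap f z0 b Hc) in HE.
  apply (f_equal (fun x => x + seg_integral f z0 b)%C) in HE.
  ring_simplify in HE. rewrite HE. ring.
Qed.

Lemma is_C_derive_seg_integral (f : C -> C) z0 z rho : 0 < rho ->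
  (forall y, Cmod (y - z) < rho -> continuous f y) ->
  (forall y, Cmod (y - z) < rho ->
     seg_integral f z0 y = (seg_integral f z0 z + seg_integral f z y)%C) ->
  is_C_derive (seg_integral f z0) z (f z).
Proof.
  intros Hr Hc Hs. apply is_C_derive_eps. intros e He.
  assert (Hzz : Cmod (z - z) = 0) by (replace (z - z)%C with (RtoC 0) by ring; apply Cmod_0).
  destruct (proj1 (continuous_C_eps f z) (Hc z ltac:(lra)) e He) as (d & Hd & Hdd).
  exists (Rmin rho d). split; [apply Rmin_pos; lra|]. intros y Hy.
  assert (Hy1 := Rlt_le_trans _ _ _ Hy (Rmin_l _ _)).
  assert (Hy2 := Rlt_le_trans _ _ _ Hy (Rmin_r _ _)).
  assert (Hseg : forall t, 0 <= t <= 1 -> Cmod (z + RtoC t * (y - z) - z) < Rmin rho d).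
  { intros t Ht. apply Cmod_seg_sub_lt; auto. rewrite Hzz. apply Rmin_pos; lra. }
  assert (Hcf : continuous_on_seg f z y)
    by (intros t Ht; apply Hc; eapply Rlt_le_trans; [apply Hseg, Ht|apply Rmin_l]).
  rewrite (Hs y Hy1).
  replace (seg_integral f z0 z + seg_integral f z y - seg_integral f z0 z - (y - z) * f z)%C
    with (seg_integral f z y - seg_integral (fun _ => f z) z y)%C
    by (rewrite seg_integral_const; ring).
  rewrite <- seg_integral_minus by (auto; intros t _; apply continuous_const).
  rewrite Rmult_comm. apply seg_integral_norm_le.
  - intros t Ht. apply (continuous_minus (K := C_AbsRing) (V := C_NormedModule));
      [apply Hcf, Ht|apply continuous_const].
  - intros t Ht. left. apply Hdd. eapply Rlt_le_trans; [apply Hseg, Ht|apply Rmin_r].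
Qed.

Definition closed_disk (r : R) (z : C) : Prop := Cmod z <= r.

Lemma convex_closed_disk r : convex (closed_disk r).
Proof.
  intros x y t Hx Hy Ht. unfold closed_disk in *.
  pose proof (Cmod_seg_sub_le x y 0 t Ht) as H.
  replace (x + RtoC t * (y - x) - 0)%C with (x + RtoC t * (y - x))%C in H by ring.
  replace (x - 0)%C with x in H by ring. replace (y - 0)%C with y in H by ring.
  eapply Rle_trans; [exact H|]. now apply Rmax_lub.
Qed.

Lemma approx_closed_closed_disk r : approx_closed (closed_disk r).
Proof.
  intros z H. unfold closed_disk. apply Rle_of_forall_eps. intros e He.
  destruct (H e He) as (y & Hy1 & Hy2). unfold closed_disk in Hy1.
  pose proof (Cmod_triangle y (z - y)). replace (y + (z - y))%C with z in * by ring.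
  rewrite (Cmod_sym z y) in *. lra.
Qed.

Lemma Disk_ball z y : Disk z -> Cmod (y - z) < (1 - Cmod z) / 2 -> Disk y.
Proof.
  unfold Disk. intros Hz Hy. pose proof (Cmod_triangle z (y - z)).
  replace (z + (y - z))%C with y in * by ring. lra.
Qed.

Lemma Disk_seg_integral_add (w : C -> C) a b : analytic_on Disk w -> Disk a -> Disk b ->
  seg_integral w 0 b = (seg_integral w 0 a + seg_integral w a b)%C.
Proof.
  intros Hw Ha Hb. set (r := Rmax (Cmod a) (Cmod b)).
  assert (Hr : r < 1) by (apply Rmax_lub_lt; auto).
  assert (HK : forall z, closed_disk r z -> Disk z)
    by (unfold closed_disk, Disk; intros; lra).
  assert (K0 : closed_disk r 0).
  { unfold closed_disk. rewrite Cmod_0.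
    eapply Rle_trans; [apply Cmod_ge_0|apply (Rmax_l _ (Cmod b))]. }
  assert (Ka : closed_disk r a) by apply Rmax_l. assert (Kb : closed_disk r b) by apply Rmax_r.
  apply seg_integral_add_of_triangle.
  - apply (goursat (closed_disk r)); auto using convex_closed_disk, approx_closed_closed_disk.
  - apply (continuous_on_seg_convex (closed_disk r)); auto using convex_closed_disk.
    intros z Hz. apply ex_C_derive_continuous, Hw, HK, Hz.
Qed.

Lemma is_C_derive_Disk_primitive (w : C -> C) z : analytic_on Disk w -> Disk z ->
  is_C_derive (seg_integral w 0) z (w z).
Proof.
  intros Hw Hz. apply (is_C_derive_seg_integral w 0 z ((1 - Cmod z) / 2)).
  - unfold Disk in Hz. lra.
  - intros y Hy. apply ex_C_derive_continuous, Hw. eapply Disk_ball; eauto.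
  - intros y Hy. apply Disk_seg_integral_add; auto. eapply Disk_ball; eauto.
Qed.

(** * Triangles with a vertex at 0 *)

Lemma triangle_integral_norm_le (f : C -> C) r B a b c :
  (forall z, closed_disk r z -> continuous f z) -> (forall z, closed_disk r z -> Cmod (f z) <= B) ->
  closed_disk r a -> closed_disk r b -> closed_disk r c ->
  Cmod (triangle_integral f a b c) <= 6 * r * B.
Proof.
  intros Hc HB Ha Hb Hc'.
  assert (Edge : forall x y, closed_disk r x -> closed_disk r y ->
                   Cmod (seg_integral f x y) <= 2 * r * B).
  { intros x y Hx Hy. eapply Rle_trans; [apply seg_integral_norm_le|].
    - apply (continuous_on_seg_convex (closed_disk r)); auto using convex_closed_disk.
    - intros t Ht. apply HB, convex_closed_disk; auto.
    - pose proof (Cmod_triangle y (- x)). rewrite Cmod_opp in *. unfold closed_disk in *.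
      pose proof (Rle_trans _ _ _ (Cmod_ge_0 _) (HB x Hx)).
      apply Rmult_le_compat_r; [lra|]. replace (y + - x)%C with (y - x)%C in * by ring. lra. }
  unfold triangle_integral.
  pose proof (Cmod_triangle (seg_integral f a b + seg_integral f b c) (seg_integral f c a)).
  pose proof (Cmod_triangle (seg_integral f a b) (seg_integral f b c)).
  pose proof (Edge a b Ha Hb). pose proof (Edge b c Hb Hc'). pose proof (Edge c a Hc' Ha). lra.
Qed.

Lemma closed_disk_scal r (s : R) z : 0 <= s -> closed_disk r z -> closed_disk (s * r) (RtoC s * z).
Proof.
  unfold closed_disk. intros Hs Hz. rewrite Cmod_scal, Rabs_pos_eq by exact Hs.
  apply Rmult_le_compat_l; assumption.
Qed.

Lemma triangle_integral_cut (f : C -> C) r a b s :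
  (forall z, closed_disk r z -> continuous f z) ->
  closed_disk r a -> closed_disk r b -> 0 <= s <= 1 ->
  triangle_integral f 0 a b =
  (triangle_integral f 0 (RtoC s * a) (RtoC s * b) + triangle_integral f (RtoC s * a) a b
   + triangle_integral f (RtoC s * a) b (RtoC s * b))%C.
Proof.
  intros Hc Ha Hb Hs.
  assert (Hseg : forall x y, closed_disk r x -> closed_disk r y -> continuous_on_seg f x y)
    by (intros; apply (continuous_on_seg_convex (closed_disk r)); auto using convex_closed_disk).
  assert (K0 : closed_disk r 0)
    by (unfold closed_disk in *; rewrite Cmod_0; pose proof (Cmod_ge_0 a); lra).
  assert (Ksa : closed_disk r (RtoC s * a)).
  { replace (RtoC s * a)%C with (0 + RtoC s * (a - 0))%C by ring.
    apply convex_closed_disk; auto; lra. }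
  assert (Ksb : closed_disk r (RtoC s * b)).
  { replace (RtoC s * b)%C with (0 + RtoC s * (b - 0))%C by ring.
    apply convex_closed_disk; auto; lra. }
  unfold triangle_integral.
  rewrite (seg_integral_split f 0 a s), (seg_integral_split f b 0 (1 - s)) by (auto; lra).
  replace (0 + RtoC s * (a - 0))%C with (RtoC s * a)%C by ring.
  replace (b + RtoC (1 - s) * (0 - b))%C with (RtoC s * b)%C by (Csimpl; ring).
  rewrite (seg_integral_swap f (RtoC s * a) b), (seg_integral_swap f (RtoC s * a) (RtoC s * b))
    by auto.
  ring.
Qed.

Definition dot (u z : C) : R := Re (Cconj u * z).

Lemma dot_le_Cmod u v : Cmod u = 1 -> Rabs (dot u v) <= Cmod v.
Proof.
  intros Hu. unfold dot. eapply Rle_trans; [apply re_le_Cmod|].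
  rewrite Cmod_mult, Cmod_conj, Hu. lra.
Qed.

Lemma dot_minus u x y : dot u (x - y) = dot u x - dot u y.
Proof.
  unfold dot. replace (Cconj u * (x - y))%C with (Cconj u * x + - (Cconj u * y))%C by ring.
  rewrite re_plus, re_opp. ring.
Qed.

Lemma dot_scal u (s : R) v : dot u (RtoC s * v) = s * dot u v.
Proof.
  unfold dot. rewrite Cmult_assoc, (Cmult_comm _ (RtoC s)), <- Cmult_assoc. apply re_scal_l.
Qed.

Lemma dot_seg u x y t : dot u (x + RtoC t * (y - x)) = (1 - t) * dot u x + t * dot u y.
Proof.
  unfold dot. replace (Cconj u * (x + RtoC t * (y - x)))%C
    with (RtoC (1 - t) * (Cconj u * x) + RtoC t * (Cconj u * y))%C by (Csimpl; ring).
  rewrite re_plus, !re_scal_l. ring.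
Qed.

Lemma dot_self u : Cmod u = 1 -> dot u u = 1.
Proof. intros Hu. unfold dot. rewrite Cmult_comm, <- Cmod2_conj, re_RtoC, Hu. ring. Qed.

Lemma dot_pos_neq0 u z : 0 < dot u z -> z <> RtoC 0.
Proof. intros H ->. unfold dot in H. rewrite Cmult_0_r in H. simpl in H. lra. Qed.

Definition disk_half_plane (u : C) (r eta : R) (z : C) : Prop := Cmod z <= r /\ eta <= dot u z.

Lemma convex_disk_half_plane u r eta : convex (disk_half_plane u r eta).
Proof.
  intros x y t [Hx1 Hx2] [Hy1 Hy2] Ht. split.
  - apply (convex_closed_disk r); auto.
  - rewrite dot_seg. nra.
Qed.

Lemma approx_closed_disk_half_plane u r eta : Cmod u = 1 -> approx_closed (disk_half_plane u r eta).
Proof.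
  intros Hu z H. split.
  - apply approx_closed_closed_disk. intros e He.
    destruct (H e He) as (y & [Hy _] & Hyz). exists y. auto.
  - apply Rle_of_forall_eps. intros e He. destruct (H e He) as (y & [_ Hy] & Hyz).
    pose proof (dot_le_Cmod u (y - z) Hu) as Hb. rewrite dot_minus in Hb.
    apply Rabs_le_between in Hb. lra.
Qed.

(* Cutting off the small triangle [(0, s a, s b)], the rest of the triangle [(0, a, b)] lies
   in the half-plane [dot u z >= s m] where Goursat's theorem applies. *)
Lemma triangle_integral_vertex0_le (f : C -> C) u r a b s B :
  Cmod u = 1 ->
  (forall z, closed_disk r z -> continuous f z) ->
  (forall z, closed_disk r z -> 0 < dot u z -> ex_C_derive f z) ->
  closed_disk r a -> closed_disk r b -> 0 < dot u a -> 0 < dot u b -> 0 < s <= 1 ->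
  (forall z, closed_disk (s * r) z -> Cmod (f z) <= B) ->
  Cmod (triangle_integral f 0 a b) <= 6 * s * r * B.
Proof.
  intros Hu Hc Hd Ha Hb Hua Hub Hs HB.
  assert (Hr : 0 <= r) by (unfold closed_disk in Ha; pose proof (Cmod_ge_0 a); lra).
  assert (K0 : closed_disk r 0) by (unfold closed_disk; rewrite Cmod_0; exact Hr).
  set (m := Rmin (dot u a) (dot u b)).
  assert (Hm : 0 < m) by (apply Rmin_pos; auto).
  assert (Hma : m <= dot u a) by apply Rmin_l. assert (Hmb : m <= dot u b) by apply Rmin_r.
  set (K := disk_half_plane u r (s * m)).
  assert (Kscal : forall x, closed_disk r x -> m <= dot u x -> K (RtoC s * x)%C).
  { intros x Hx Hmx. split; [|rewrite dot_scal; apply Rmult_le_compat_l; lra].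
    replace (RtoC s * x)%C with (0 + RtoC s * (x - 0))%C by ring.
    apply convex_closed_disk; auto; lra. }
  assert (Ka : K a) by (split; [exact Ha|nra]). assert (Kb : K b) by (split; [exact Hb|nra]).
  assert (G : forall x y z, K x -> K y -> K z -> triangle_integral f x y z = RtoC 0).
  { intros x y z. apply goursat.
    - apply convex_disk_half_plane.
    - apply approx_closed_disk_half_plane, Hu.
    - intros w [Hw1 Hw2]. apply Hd; [exact Hw1|nra]. }
  rewrite (triangle_integral_cut f r a b s), (G _ a b), (G _ b (RtoC s * b)%C), !Cplus_0_r;
    auto; [|lra].
  replace (6 * s * r * B) with (6 * (s * r) * B) by ring.
  apply (triangle_integral_norm_le f (s * r) B); auto.
  - intros z Hz. apply Hc. unfold closed_disk in *. nra.
  - unfold closed_disk. rewrite Cmod_0. unfold closed_disk in Ha. pose proof (Cmod_ge_0 a). nra.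
  - apply closed_disk_scal; [lra|exact Ha].
  - apply closed_disk_scal; [lra|exact Hb].
Qed.

Lemma triangle_integral_vertex0 (f : C -> C) u r a b :
  Cmod u = 1 ->
  (forall z, closed_disk r z -> continuous f z) ->
  (forall z, closed_disk r z -> 0 < dot u z -> ex_C_derive f z) ->
  closed_disk r a -> closed_disk r b -> 0 < dot u a -> 0 < dot u b ->
  triangle_integral f 0 a b = RtoC 0.
Proof.
  intros Hu Hc Hd Ha Hb Hua Hub.
  assert (Hr : 0 <= r) by (unfold closed_disk in Ha; pose proof (Cmod_ge_0 a); lra).
  assert (K0 : closed_disk r 0) by (unfold closed_disk; rewrite Cmod_0; exact Hr).
  destruct (proj1 (continuous_C_eps f (RtoC 0)) (Hc 0 K0) 1 Rlt_0_1) as (d0 & Hd0 & Hf0).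
  set (B := Cmod (f 0) + 1).
  assert (HB : 0 < B) by (unfold B; pose proof (Cmod_ge_0 (f 0)); lra).
  apply Cmod_eq_0, Rle_antisym; [|apply Cmod_ge_0].
  apply Rle_of_forall_eps. intros e He.
  set (s := Rmin 1 (Rmin (d0 / (2 * (r + 1))) (e / (6 * (r + 1) * B)))).
  assert (Hs0 : 0 < s).
  { unfold s. repeat apply Rmin_pos; try lra; apply Rdiv_lt_0_compat; nra. }
  assert (Hs1 : s <= 1) by apply Rmin_l.
  assert (Hs2 : s <= d0 / (2 * (r + 1))) by (eapply Rle_trans; [apply Rmin_r|apply Rmin_l]).
  assert (Hs3 : s <= e / (6 * (r + 1) * B)) by (eapply Rle_trans; [apply Rmin_r|apply Rmin_r]).
  apply Rle_div_r in Hs2; [|lra]. apply Rle_div_r in Hs3; [|nra].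
  eapply Rle_trans; [apply (triangle_integral_vertex0_le f u r a b s B); auto; try lra|nra].
  intros z Hz. unfold closed_disk in Hz.
  assert (Hz0 : Cmod (z - 0) < d0) by (replace (z - 0)%C with z by ring; nra).
  pose proof (Hf0 z Hz0). pose proof (Cmod_triangle (f 0) (f z - f 0)).
  replace (f 0 + (f z - f 0))%C with (f z) in * by ring. unfold B. lra.
Qed.

(** * The angular primitive *)

Lemma ang_integrand_neq0 (w : C -> C) z : z <> RtoC 0 -> ang_integrand w z = ((w z - w 0) / z)%C.
Proof. intros Hz. unfold ang_integrand. destruct (Ceq_dec z 0); [contradiction|reflexivity]. Qed.

Lemma ang_integrand_0 (w : C -> C) l0 : is_C_derive w (RtoC 0) l0 -> ang_integrand w (RtoC 0) = l0.
Proof.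
  intros H. unfold ang_integrand.
  destruct (Ceq_dec (RtoC 0) (RtoC 0)) as [_|n]; [|now contradiction n].
  apply (@iota_unique C_AbsRing C_CompleteNormedModule); [|exact H].
  intros y Hy.
  now rewrite <- (is_C_derive_unique w (RtoC 0) y Hy), (is_C_derive_unique w (RtoC 0) l0 H).
Qed.

Lemma continuous_ang_integrand_0 (w : C -> C) l0 :
  is_C_derive w (RtoC 0) l0 -> continuous (ang_integrand w) (RtoC 0).
Proof.
  intros H. apply continuous_C_eps. rewrite (ang_integrand_0 w l0 H).
  rewrite is_C_derive_eps in H. intros e He.
  destruct (H (e / 2) ltac:(lra)) as (d & Hd & Hdd).
  exists d. split; [exact Hd|]. intros y Hy.
  destruct (Ceq_dec y 0) as [->|ny].
  - rewrite (ang_integrand_0 w l0); [|now apply is_C_derive_eps].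
    replace (l0 - l0)%C with (RtoC 0) by ring. rewrite Cmod_0. lra.
  - rewrite ang_integrand_neq0 by exact ny. specialize (Hdd y Hy).
    replace (y - 0)%C with y in Hdd by ring.
    replace ((w y - w 0) / y - l0)%C with ((w y - w 0 - y * l0) / y)%C by (field; exact ny).
    assert (Hy0 : 0 < Cmod y) by (apply Cmod_gt_0, ny).
    rewrite Cmod_div by exact ny. apply Rle_lt_trans with (e / 2); [|lra].
    apply Rle_div_l; lra.
Qed.

Lemma ex_C_derive_ang_integrand (w : C -> C) z :
  analytic_on Disk w -> Disk z -> z <> RtoC 0 -> ex_C_derive (ang_integrand w) z.
Proof.
  intros Hw Hz nz. destruct (Hw z Hz) as [l Hl].
  assert (Hsub : is_C_derive (fun y => w y - w 0)%C z l).
  { rewrite <- (minus_zero_r l). exact (is_derive_minus _ _ z _ _ Hl (is_derive_const (w 0) z)). }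
  eexists. eapply is_derive_ext_loc;
    [|exact (is_C_derive_mult _ _ z _ _ Hsub (is_C_derive_Cinv z nz))].
  assert (Hz0 : 0 < Cmod z) by (apply Cmod_gt_0, nz).
  apply (@locally_le_locally_norm C_AbsRing (AbsRing_NormedModule C_AbsRing)).
  exists (mkposreal (Cmod z) Hz0). intros y Hy. change (Cmod (y - z) < Cmod z) in Hy.
  rewrite ang_integrand_neq0; [reflexivity|].
  intros ->. replace (0 - z)%C with (- z)%C in Hy by ring. rewrite Cmod_opp in Hy. lra.
Qed.

Lemma continuous_ang_integrand (w : C -> C) z :
  analytic_on Disk w -> Disk z -> continuous (ang_integrand w) z.
Proof.
  intros Hw Hz. destruct (Ceq_dec z 0) as [->|nz].
  - destruct (Hw 0 Hz) as [l0 Hl0]. exact (continuous_ang_integrand_0 w l0 Hl0).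
  - now apply ex_C_derive_continuous, ex_C_derive_ang_integrand.
Qed.

Definition half_disk (u z : C) : Prop := Disk z /\ 0 < dot u z.

Lemma half_disk_ball u z y : Cmod u = 1 -> half_disk u z ->
  Cmod (y - z) < Rmin ((1 - Cmod z) / 2) (dot u z) -> half_disk u y.
Proof.
  intros Hu [Hz Huz] Hy. split.
  - eapply Disk_ball; [exact Hz|]. eapply Rlt_le_trans; [exact Hy|apply Rmin_l].
  - pose proof (dot_le_Cmod u (y - z) Hu) as Hb. rewrite dot_minus in Hb.
    apply Rabs_le_between in Hb. pose proof (Rmin_r ((1 - Cmod z) / 2) (dot u z)). lra.
Qed.

Definition ang_primitive (w : C -> C) : C -> C := seg_integral (ang_integrand w) 0.

Lemma ang_primitive_add (w : C -> C) u a b : analytic_on Disk w -> Cmod u = 1 ->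
  half_disk u a -> half_disk u b ->
  ang_primitive w b = (ang_primitive w a + seg_integral (ang_integrand w) a b)%C.
Proof.
  intros Hw Hu [Ha Hua] [Hb Hub]. unfold ang_primitive. set (r := Rmax (Cmod a) (Cmod b)).
  assert (Hr : r < 1) by (apply Rmax_lub_lt; auto).
  assert (K0 : closed_disk r 0).
  { unfold closed_disk. rewrite Cmod_0.
    eapply Rle_trans; [apply Cmod_ge_0|apply (Rmax_l _ (Cmod b))]. }
  assert (Ka : closed_disk r a) by apply Rmax_l. assert (Kb : closed_disk r b) by apply Rmax_r.
  assert (Hc : forall z, closed_disk r z -> continuous (ang_integrand w) z).
  { intros z Hz. apply continuous_ang_integrand; auto. unfold closed_disk, Disk in *. lra. }
  apply seg_integral_add_of_triangle.
  - apply (triangle_integral_vertex0 _ u r); auto.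
    intros z Hz Huz. apply ex_C_derive_ang_integrand, (dot_pos_neq0 u); auto.
    unfold closed_disk, Disk in *. lra.
  - apply (continuous_on_seg_convex (closed_disk r)); auto using convex_closed_disk.
Qed.

Lemma is_C_derive_ang_primitive (w : C -> C) u z : analytic_on Disk w -> Cmod u = 1 ->
  half_disk u z -> is_C_derive (ang_primitive w) z (ang_integrand w z).
Proof.
  intros Hw Hu Hz. pose proof Hz as [Dz Huz]. unfold ang_primitive.
  apply (is_C_derive_seg_integral _ _ z (Rmin ((1 - Cmod z) / 2) (dot u z))).
  - unfold Disk in Dz. apply Rmin_pos; lra.
  - intros y Hy. apply continuous_ang_integrand; auto.
    apply (half_disk_ball u z y Hu Hz Hy).
  - intros y Hy. apply (ang_primitive_add w u); auto. apply (half_disk_ball u z y Hu Hz Hy).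
Qed.

Lemma continuous_ang_primitive (w : C -> C) u z : analytic_on Disk w -> Cmod u = 1 ->
  half_disk u z -> continuous (ang_primitive w) z.
Proof.
  intros Hw Hu Hz. apply ex_C_derive_continuous.
  exists (ang_integrand w z). exact (is_C_derive_ang_primitive w u z Hw Hu Hz).
Qed.

Lemma ang_prim_eq (w : C -> C) z : ang_prim w z = (- Ci * ang_primitive w z)%C.
Proof.
  unfold ang_prim, ang_primitive, seg_integral, CRInt. f_equal.
  apply (@RInt_ext C_R_CompleteNormedModule). intros t _. unfold seg_integrand.
  replace (0 + RtoC t * (z - 0))%C with (RtoC t * z)%C by ring.
  replace (z - 0)%C with z by ring. reflexivity.
Qed.

Lemma convex_half_disk u : convex (half_disk u).
Proof.
  intros x y t [Hx Hux] [Hy Huy] Ht. split.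
  - unfold Disk in *. pose proof (Cmod_seg_sub_lt x y 0 t 1 Ht) as H.
    replace (x - 0)%C with x in H by ring. replace (y - 0)%C with y in H by ring.
    replace (x + RtoC t * (y - x) - 0)%C with (x + RtoC t * (y - x))%C in H by ring. auto.
  - rewrite dot_seg. nra.
Qed.

Lemma half_disk_near u z : Cmod u = 1 -> Disk z -> Cmod (z - u) < 1 -> half_disk u z.
Proof.
  intros Hu Hz Hzu. split; [exact Hz|].
  pose proof (dot_le_Cmod u (z - u) Hu) as Hb. rewrite dot_minus, dot_self in Hb by exact Hu.
  apply Rabs_le_between in Hb. lra.
Qed.

(* [z (w 0 - c + P z)] is a primitive of [w + (P - c)]
   because [w z = w 0 + z * ang_integrand w z]. *)
Lemma seg_integral_ang_decomp (w : C -> C) u c a b :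
  analytic_on Disk w -> Cmod u = 1 -> half_disk u a -> half_disk u b ->
  let P := ang_primitive w in
  seg_integral w a b =
  ((b - a) * w 0 + b * (P b - c) - a * (P a - c) - seg_integral (fun z => P z - c) a b)%C.
Proof.
  intros Hw Hu Ha Hb P.
  assert (Hab : forall t, 0 <= t <= 1 -> half_disk u (a + RtoC t * (b - a))%C)
    by (intros; apply convex_half_disk; auto).
  assert (HP : forall z, half_disk u z -> is_C_derive P z (ang_integrand w z))
    by (intros; apply (is_C_derive_ang_primitive w u); auto).
  assert (HPc : continuous_on_seg (fun z => P z - c)%C a b).
  { intros t Ht. apply (continuous_minus (K := C_AbsRing) (V := C_NormedModule));
      [apply (continuous_ang_primitive w u); auto|apply continuous_const]. }
  assert (Hwc : continuous_on_seg w a b)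
    by (intros t Ht; apply ex_C_derive_continuous, Hw, (Hab t Ht)).
  assert (HF : seg_integral (fun z => w z + (P z - c))%C a b
               = ((b * (w 0 - c + P b)) - (a * (w 0 - c + P a)))%C).
  { apply (seg_integral_primitive (fun z => z * (w 0 - c + P z))%C);
      [|intros t Ht; apply (continuous_plus (K := C_AbsRing) (V := C_NormedModule));
        [apply Hwc|apply HPc]; exact Ht].
    intros t Ht. set (z := (a + RtoC t * (b - a))%C). destruct (Hab t Ht) as [Dz Huz].
    assert (Hc : is_C_derive (fun y => w 0 - c + P y)%C z (ang_integrand w z)).
    { apply is_C_derive_plus_const, HP, Hab, Ht. }
    pose proof (is_C_derive_mult _ _ z _ _ (is_C_derive_id z) Hc) as D. cbv beta in D.
    replace (w z + (P z - c))%C with (RtoC 1 * (w 0 - c + P z) + z * ang_integrand w z)%C;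
      [exact D|].
    pose proof (dot_pos_neq0 u z Huz) as nz. rewrite ang_integrand_neq0 by exact nz.
    field. exact nz. }
  rewrite seg_integral_plus in HF by auto.
  transitivity (b * (w 0 - c + P b) - a * (w 0 - c + P a) - seg_integral (fun z => P z - c) a b)%C;
    [rewrite <- HF|]; ring.
Qed.

(** * Integrability of the singularity *)

Lemma ang_primitive_limit (w : C -> C) z1 :
  has_finite_limit_in_disk (ang_prim w) z1 ->
  exists L, forall eta, 0 < eta -> exists delta, 0 < delta /\
    forall z, Disk z -> Cmod (z - z1) < delta -> Cmod (ang_primitive w z - L) < eta.
Proof.
  intros [L HL]. exists (Ci * L)%C. intros eta Heta.
  assert (Hloc : @locally C_UniformSpace L (fun v => Cmod (v - L) < eta)).
  { apply (@locally_le_locally_norm C_AbsRing C_NormedModule). exists (mkposreal eta Heta). auto. }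
  destruct (@locally_norm_le_locally C_AbsRing C_NormedModule z1 _ (HL _ Hloc)) as [d Hd].
  exists d. split; [apply cond_pos|]. intros z Dz Hz.
  specialize (Hd z Hz Dz). simpl in Hd. rewrite ang_prim_eq in Hd.
  replace (ang_primitive w z - Ci * L)%C with (Ci * (- Ci * ang_primitive w z - L))%C by Cfield.
  rewrite Cmod_mult, Cmod_Ci. lra.
Qed.

Lemma seg_integral_le_near (w : C -> C) z1 L eta delta a b :
  analytic_on Disk w -> Cmod z1 = 1 -> delta <= 1 ->
  (forall z, Disk z -> Cmod (z - z1) < delta -> Cmod (ang_primitive w z - L) < eta) ->
  Disk a -> Disk b -> Cmod (a - z1) < delta -> Cmod (b - z1) < delta ->
  Cmod (seg_integral w a b) <= Cmod (b - a) * (Cmod (w 0) + eta) + 2 * eta.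
Proof.
  intros Hw Hz1 Hd HPL Ha Hb Haz Hbz.
  assert (Da := half_disk_near z1 a Hz1 Ha ltac:(lra)).
  assert (Db := half_disk_near z1 b Hz1 Hb ltac:(lra)).
  rewrite (seg_integral_ang_decomp w z1 L a b Hw Hz1 Da Db). cbv zeta.
  assert (HP : forall z, Disk z -> Cmod (z - z1) < delta ->
                 Cmod (z * (ang_primitive w z - L)) <= eta).
  { intros z Dz Hz. rewrite Cmod_mult. unfold Disk in Dz.
    pose proof (HPL z Dz Hz). pose proof (Cmod_ge_0 z).
    pose proof (Cmod_ge_0 (ang_primitive w z - L)). nra. }
  assert (HI : Cmod (seg_integral (fun z => ang_primitive w z - L)%C a b) <= Cmod (b - a) * eta).
  { apply seg_integral_norm_le; intros t Ht.
    - apply (continuous_minus (K := C_AbsRing) (V := C_NormedModule));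
        [apply (continuous_ang_primitive w z1), convex_half_disk; auto|apply continuous_const].
    - destruct (convex_half_disk z1 a b t Da Db Ht) as [Dt _].
      left. apply HPL; [exact Dt|apply Cmod_seg_sub_lt; auto]. }
  pose proof (HP a Ha Haz). pose proof (HP b Hb Hbz).
  pose proof (Cmod_sub_le
                ((b - a) * w 0 + b * (ang_primitive w b - L) - a * (ang_primitive w a - L))
                (seg_integral (fun z => ang_primitive w z - L)%C a b)).
  pose proof (Cmod_sub_le ((b - a) * w 0 + b * (ang_primitive w b - L))
                (a * (ang_primitive w a - L))).
  pose proof (Cmod_triangle ((b - a) * w 0) (b * (ang_primitive w b - L))).
  pose proof (Cmod_mult (b - a) (w 0)). lra.
Qed.

Lemma seg_integral_small_near (w : C -> C) z1 L :
  analytic_on Disk w -> Cmod z1 = 1 ->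
  (forall eta, 0 < eta -> exists delta, 0 < delta /\
     forall z, Disk z -> Cmod (z - z1) < delta -> Cmod (ang_primitive w z - L) < eta) ->
  forall eps, 0 < eps -> exists delta, 0 < delta /\ forall a b, Disk a -> Disk b ->
    Cmod (a - z1) < delta -> Cmod (b - z1) < delta -> Cmod (seg_integral w a b) < eps.
Proof.
  intros Hw Hz1 HL eps Heps.
  destruct (HL (eps / 8) ltac:(lra)) as (dL & HdL & HPL).
  set (M := Cmod (w 0) + 1). assert (HM : 0 < M) by (unfold M; pose proof (Cmod_ge_0 (w 0)); lra).
  set (delta := Rmin dL (Rmin 1 (eps / (8 * M)))).
  assert (Hd1 : delta <= dL) by apply Rmin_l.
  assert (Hd2 : delta <= 1) by (eapply Rle_trans; [apply Rmin_r|apply Rmin_l]).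
  assert (Hd3 : delta <= eps / (8 * M)) by (eapply Rle_trans; [apply Rmin_r|apply Rmin_r]).
  exists delta. split; [repeat apply Rmin_pos; try lra; apply Rdiv_lt_0_compat; lra|].
  intros a b Ha Hb Haz Hbz.
  eapply Rle_lt_trans; [apply (seg_integral_le_near w z1 L (eps / 8) delta); auto|].
  { intros z Dz Hz. apply HPL; auto; lra. }
  assert (Hba : Cmod (b - a) < 2 * delta).
  { pose proof (Cmod_triangle (b - z1) (- (a - z1))). rewrite Cmod_opp in *.
    replace (b - z1 + - (a - z1))%C with (b - a)%C in * by ring. lra. }
  apply Rle_div_r in Hd3; [|lra].
  assert (A1 : Cmod (b - a) * Cmod (w 0) <= eps / 4).
  { apply Rle_trans with (2 * delta * M); [|lra].
    apply Rmult_le_compat; [apply Cmod_ge_0|apply Cmod_ge_0|lra|unfold M; lra]. }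
  assert (A2 : Cmod (b - a) * (eps / 8) <= eps / 4).
  { apply Rle_trans with (2 * (eps / 8)); [apply Rmult_le_compat_r; lra|lra]. }
  lra.
Qed.

Lemma curve_limit_of_cauchy (F : C -> C) (S : C -> Prop) z1 (gamma : R -> C) :
  (forall eps, 0 < eps -> exists delta, 0 < delta /\ forall a b, S a -> S b ->
     Cmod (a - z1) < delta -> Cmod (b - z1) < delta -> Cmod (F b - F a) < eps) ->
  (forall t, 0 <= t < 1 -> S (gamma t)) -> filterlim gamma (at_left 1) (locally z1) ->
  exists L, filterlim (fun s => F (gamma s)) (at_left 1) (locally L).
Proof.
  intros HF HS Hg.
  apply (proj1 (@filterlim_locally_cauchy R
                  (CompleteNormedModule.CompleteSpace _ C_CompleteNormedModule)
                  (at_left 1) (at_left_proper_filter 1) _)).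
  intros eps. destruct (HF eps (cond_pos eps)) as (d & Hd & Hdd).
  exists (fun s => 0 <= s < 1 /\ Cmod (gamma s - z1) < d). split.
  - apply filter_and.
    + exists (mkposreal 1 Rlt_0_1). intros s Hs Hs1. change (Rabs (s - 1) < 1) in Hs.
      apply Rabs_lt_between' in Hs. lra.
    + apply (Hg (fun z => Cmod (z - z1) < d)), (@locally_le_locally_norm C_AbsRing C_NormedModule).
      exists (mkposreal d Hd). auto.
  - intros u v [Hu Hu'] [Hv Hv']. apply (@norm_compat1 C_AbsRing C_NormedModule).
    exact (Hdd _ _ (HS u Hu) (HS v Hv) Hu' Hv').
Qed.

Lemma path_integral_primitive (w : C -> C) gamma dgamma z1 s :
  analytic_on Disk w -> curve_to gamma dgamma z1 -> 0 <= s < 1 ->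
  path_integral w gamma dgamma s = (seg_integral w 0 (gamma s) - seg_integral w 0 (gamma 0))%C.
Proof.
  intros Hw (HD & Hder & Hcont & _) Hs. apply RInt_curve_primitive; [lra| | |];
    intros t Ht; assert (Ht' : 0 <= t < 1) by lra.
  - apply Hder, Ht'.
  - apply is_C_derive_Disk_primitive, HD; auto.
  - apply continuous_Cmult; [|apply Hcont, Ht'].
    apply (continuous_comp_RC w gamma t (dgamma t)); [apply Hder, Ht'|].
    apply ex_C_derive_continuous, Hw, HD, Ht'.
Qed.

Theorem mainTheorem10 (w : C -> C) (z1 : C) :
  analytic_on Disk w ->
  Cmod z1 = 1 ->
  borderline_hard w z1 ->
  forall gamma dgamma : R -> C, curve_to gamma dgamma z1 ->
  exists L : C,
    filterlim (fun s => path_integral w gamma dgamma s) (at_left 1) (locally L).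
Proof.
  intros Hw Hz1 (_ & _ & Hsoft) gamma dgamma Hcurve.
  destruct (ang_primitive_limit w z1 Hsoft) as [L HL].
  pose proof Hcurve as (HD & _ & _ & _ & Hlim).
  set (F := fun z => (seg_integral w 0 z - seg_integral w 0 (gamma 0))%C).
  destruct (curve_limit_of_cauchy F Disk z1 gamma) as [I HI]; auto.
  { intros eps Heps.
    destruct (seg_integral_small_near w z1 L Hw Hz1 HL eps Heps) as (d & Hd & Hsmall).
    exists d. split; [exact Hd|]. intros a b Ha Hb Haz Hbz. unfold F.
    replace (seg_integral w 0 b - seg_integral w 0 (gamma 0)
             - (seg_integral w 0 a - seg_integral w 0 (gamma 0)))%C
      with (seg_integral w a b) by (rewrite (Disk_seg_integral_add w a b); auto; ring).
    auto. }
  exists I. apply (filterlim_ext_loc (fun s => F (gamma s))); [|exact HI].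
  exists (mkposreal 1 Rlt_0_1). intros s Hs Hs1. change (Rabs (s - 1) < 1) in Hs.
  apply Rabs_lt_between' in Hs. symmetry.
  apply (path_integral_primitive w gamma dgamma z1); auto. lra.
Qed.
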